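(* Let $n\geq 1$. For a Tamari interval diagram $(u,v)$ of size $n$, let $\chi(u,v)$ be the binary relation $\lhd$ on the set $\{x_1,\dots,x_n\}$ consisting exactly of the pairs $x_{i+l}\lhd x_i$ for all $i\in[n]$ and $0\leq l\leq u_i$, and the pairs $x_{i-k}\lhd x_i$ for all $i\in[n]$ and $0\leq k\leq v_i$. Then $\chi(u,v)$ is an interval-poset of size $n$, and the map $\chi$ is a bijection from $\mathcal{TID}_n$ (the set of Tamari interval diagrams of size $n$) to $\mathcal{IP}_n$ (the set of interval-posets of size $n$).
   Context: $[n]=\{1,\dots,n\}$. A Tamari diagram of size $n$ is a word $u=u_1\cdots u_n$ of integers with $0\leq u_i\leq n-i$ for all $i\in[n]$ and $u_{i+j}\leq u_i-j$ for all $i\in[n]$ and $0\leq j\leq u_i$. A dual Tamari diagram of size $n$ is a word $v=v_1\cdots v_n$ of integers with $0\leq v_i\leq i-1$ for all $i\in[n]$ and $v_{i-j}\leq v_i-j$ for all $i\in[n]$ and $0\leq j\leq v_i$. A Tamari diagram $u$ and a dual Tamari diagram $v$ of the same size $n$ are compatible if for all $1\leq i<j\leq n$ with $j-i\leq u_i$ one has $v_j<j-i$; a compatible pair $(u,v)$ is a Tamari interval diagram of size $n$. An interval-poset of size $n$ is a partial order $\lhd$ on $\{x_1,\dots,x_n\}$ such that for all $i<k$: if $x_k\lhd x_i$ then $x_j\lhd x_i$ for all $i<j<k$, and if $x_i\lhd x_k$ then $x_j\lhd x_k$ for all $i<j<k$. *)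

From mathcomp Require Import all_boot.
Set Implicit Arguments. Unset Strict Implicit. Unset Printing Implicit Defensive.

(* Convention: a word w = w_1 ... w_n is a [seq nat] of size n, and the
   letter w_i (1 <= i <= n) is [nth 0 w (i - 1)].  The element x_i of
   {x_1,...,x_n} is the ordinal [i - 1 : 'I_n].  A binary relation on
   {x_1,...,x_n} is a finite set of pairs; (a, b) \in R means x_(a+1) <| x_(b+1). *)

Definition letter (w : seq nat) (i : nat) : nat := nth 0 w i.-1.

Definition tamari_diagram (n : nat) (u : seq nat) : Prop :=
  size u = n /\
  (forall i, 1 <= i <= n -> letter u i <= n - i) /\
  (forall i j, 1 <= i <= n -> j <= letter u i ->
     letter u (i + j) <= letter u i - j).

Definition dual_tamari_diagram (n : nat) (v : seq nat) : Prop :=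
  size v = n /\
  (forall i, 1 <= i <= n -> letter v i <= i - 1) /\
  (forall i j, 1 <= i <= n -> j <= letter v i ->
     letter v (i - j) <= letter v i - j).

Definition compatible (n : nat) (u v : seq nat) : Prop :=
  forall i j, 1 <= i -> i < j -> j <= n -> j - i <= letter u i ->
    letter v j < j - i.

Definition tamari_interval_diagram (n : nat) (u v : seq nat) : Prop :=
  [/\ tamari_diagram n u, dual_tamari_diagram n v & compatible n u v].

Definition partial_order (n : nat) (R : {set 'I_n * 'I_n}) : Prop :=
  [/\ (forall x, (x, x) \in R),
      (forall x y, (x, y) \in R -> (y, x) \in R -> x = y) &
      (forall x y z, (x, y) \in R -> (y, z) \in R -> (x, z) \in R)].

Definition interval_poset (n : nat) (R : {set 'I_n * 'I_n}) : Prop :=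
  partial_order R /\
  (forall i j k : 'I_n, i < j < k ->
     ((k, i) \in R -> (j, i) \in R) /\ ((i, k) \in R -> (j, k) \in R)).

Definition chi (n : nat) (u v : seq nat) : {set 'I_n * 'I_n} :=
  [set p : 'I_n * 'I_n |
     ((p.2 <= p.1) && (p.1 - p.2 <= letter u p.2.+1)) ||
     ((p.1 <= p.2) && (p.2 - p.1 <= letter v p.2.+1))].

From mathcomp Require Import all_boot zify.
Set Implicit Arguments. Unset Strict Implicit. Unset Printing Implicit Defensive.

(* The nesting conditions of the two diagrams make chi(u,v) transitive, and
   compatibility makes it antisymmetric.  Conversely, in an interval-poset the
   x_(i+l) below x_i, and likewise the x_(i-k) below x_i, form an interval
   starting at x_i, so the poset is determined by the lengths of these
   intervals; these lengths form a Tamari interval diagram, and reading them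
   off chi(u,v) gives back (u,v). *)

Lemma in_chi n u v (a b : 'I_n) : ((a, b) \in chi n u v) =
  ((b <= a) && (a - b <= letter u b.+1)) || ((a <= b) && (b - a <= letter v b.+1)).
Proof. by rewrite inE. Qed.

Section ChiOfDiagram.
Variables (n : nat) (u v : seq nat).
Hypothesis tid : tamari_interval_diagram n u v.

Lemma u_bound b : b < n -> b + letter u b.+1 < n.
Proof. by case: tid => [[_ [hb _]] _ _] lt_bn; have := hb b.+1; lia. Qed.

Lemma v_bound b : b < n -> letter v b.+1 <= b.
Proof. by case: tid => [_ [_ [hb _]] _] lt_bn; have := hb b.+1; lia. Qed.

Lemma u_nested a b : a < n -> b <= a -> a - b <= letter u b.+1 ->
  letter u a.+1 <= letter u b.+1 - (a - b).
Proof.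
case: tid => [[_ [_ h]] _ _] lt_an le_ba hab.
by have := h b.+1 (a - b); rewrite addSn subnKC //; apply; lia.
Qed.

Lemma v_nested a b : b < n -> a <= b -> b - a <= letter v b.+1 ->
  letter v a.+1 <= letter v b.+1 - (b - a).
Proof.
case: tid => [_ [_ [_ h]] _] lt_bn le_ab hab.
by have := h b.+1 (b - a); rewrite (subSn (leq_subr a b)) (subKn le_ab); apply; lia.
Qed.

Lemma uv_compatible a b : a < b -> b < n -> b - a <= letter u a.+1 ->
  letter v b.+1 < b - a.
Proof. by case: tid => [_ _ h] lt_ab lt_bn; have := h a.+1 b.+1; rewrite subSS; apply; lia. Qed.

Lemma chi_refl x : (x, x) \in chi n u v.
Proof. by rewrite in_chi subnn !leqnn. Qed.

Lemma chi_antisym x y : (x, y) \in chi n u v -> (y, x) \in chi n u v -> x = y.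
Proof.
rewrite !in_chi => xy yx; apply: val_inj => /=.
have := @uv_compatible x y; have := @uv_compatible y x.
have := ltn_ord x; have := ltn_ord y; lia.
Qed.

Lemma chi_trans x y z :
  (x, y) \in chi n u v -> (y, z) \in chi n u v -> (x, z) \in chi n u v.
Proof.
rewrite !in_chi => xy yz.
have := @u_nested y z (ltn_ord y); have := @v_nested y z (ltn_ord z).
have := @uv_compatible y z; have := @uv_compatible z y.
have := ltn_ord x; have := ltn_ord y; have := ltn_ord z; lia.
Qed.

Lemma chi_interval_poset : interval_poset (chi n u v).
Proof.
split; first by split; [exact: chi_refl | exact: chi_antisym | exact: chi_trans].
by move=> i j k ijk; rewrite !in_chi; split=> ?; lia.
Qed.

End ChiOfDiagram.

Section DiagramIntro.
Variable n : nat.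

Lemma tamari_diagram_intro u : size u = n ->
  (forall b, b < n -> b + letter u b.+1 < n) ->
  (forall b c, c < n -> b <= c -> c - b <= letter u b.+1 ->
     letter u c.+1 <= letter u b.+1 - (c - b)) ->
  tamari_diagram n u.
Proof.
move=> size_u bound nested; split=> //; split=> -[//|b].
- by move=> /andP[_ /bound]; lia.
- move=> j /andP[_ /bound lt_span] le_j.
  by rewrite addSn; have := nested b (b + j); rewrite addKn; apply; lia.
Qed.

Lemma dual_tamari_diagram_intro v : size v = n ->
  (forall b, b < n -> letter v b.+1 <= b) ->
  (forall b c, b < n -> c <= b -> b - c <= letter v b.+1 ->
     letter v c.+1 <= letter v b.+1 - (b - c)) ->
  dual_tamari_diagram n v.
Proof.
move=> size_v bound nested; split=> //; split=> -[//|b].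
- by move=> /andP[_ /bound]; lia.
- move=> j /andP[_ lt_bn] le_j.
  have le_jb : j <= b by have := bound b lt_bn; lia.
  by rewrite subSn //; have := nested b (b - j); rewrite subKn //; apply; lia.
Qed.

Lemma compatible_intro u v :
  (forall b c, b < c -> c < n -> c - b <= letter u b.+1 -> letter v c.+1 < c - b) ->
  compatible n u v.
Proof. by move=> compat [//|b] [//|c] _ lt_bc lt_cn; rewrite subSS; apply: compat. Qed.

End DiagramIntro.

Section Spans.
Variables (n : nat) (R : {set 'I_n * 'I_n}).

(* The index b is a nat rather than an ordinal so that [mkseq (decr_span R) n]
   is a word; decr_span R b is the largest l with x_(b+1+l) <| x_(b+1). *)
Definition decr_span (b : nat) : nat :=
  \max_(p : 'I_n * 'I_n | [&& p.2 == b :> nat, p.2 <= p.1 & p \in R]) (p.1 - p.2).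

Definition incr_span (b : nat) : nat :=
  \max_(p : 'I_n * 'I_n | [&& p.2 == b :> nat, p.1 <= p.2 & p \in R]) (p.2 - p.1).

Lemma decr_span_ge (a b : 'I_n) : b <= a -> (a, b) \in R -> a - b <= decr_span b.
Proof.
move=> le_ba ab; apply: (leq_bigmax_cond (a, b) (F := fun p : 'I_n * 'I_n => p.1 - p.2)).
by rewrite /= eqxx le_ba ab.
Qed.

Lemma incr_span_ge (a b : 'I_n) : a <= b -> (a, b) \in R -> b - a <= incr_span b.
Proof.
move=> le_ab ab; apply: (leq_bigmax_cond (a, b) (F := fun p : 'I_n * 'I_n => p.2 - p.1)).
by rewrite /= eqxx le_ab ab.
Qed.

Lemma decr_spanP (b : 'I_n) : (b, b) \in R ->
  exists2 a : 'I_n, b <= a & (a, b) \in R /\ decr_span b = a - b.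
Proof.
move=> bb; have bb_cond : [&& (b, b).2 == b :> nat, b <= b & (b, b) \in R].
  by rewrite eqxx leqnn bb.
rewrite /decr_span (bigmax_eq_arg (b, b) bb_cond).
case: arg_maxnP => // -[a c] /and3P[/eqP /= /val_inj -> le_ba ab] _.
by exists a.
Qed.

Lemma incr_spanP (b : 'I_n) : (b, b) \in R ->
  exists2 a : 'I_n, a <= b & (a, b) \in R /\ incr_span b = b - a.
Proof.
move=> bb; have bb_cond : [&& (b, b).2 == b :> nat, b <= b & (b, b) \in R].
  by rewrite eqxx leqnn bb.
rewrite /incr_span (bigmax_eq_arg (b, b) bb_cond).
case: arg_maxnP => // -[a c] /and3P[/eqP /= /val_inj -> le_ab ab] _.
by exists a.
Qed.

End Spans.

Section IntervalPosetSpans.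
Variables (n : nat) (R : {set 'I_n * 'I_n}).
Hypothesis ipR : interval_poset R.

Let refl_R x : (x, x) \in R. Proof. by case: ipR => -[]. Qed.

Lemma decr_span_bound (b : 'I_n) : b + decr_span R b < n.
Proof. by have [a le_ba [_ ->]] := decr_spanP (refl_R b); have := ltn_ord a; lia. Qed.

Lemma incr_span_bound (b : 'I_n) : incr_span R b <= b.
Proof. by have [a le_ab [_ ->]] := incr_spanP (refl_R b); lia. Qed.

Lemma decr_span_spec (a b : 'I_n) : b <= a -> ((a, b) \in R) = (a - b <= decr_span R b).
Proof.
move=> le_ba; apply/idP/idP => [|within_span]; first exact: decr_span_ge.
have [a0 le_ba0 [a0b span_eq]] := decr_spanP (refl_R b).
have [lt_ba | eq_ba] := ltnP b a; last first.
  by have -> : a = b by apply: ord_inj; lia.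
have [lt_aa0 | le_a0a] := ltnP a a0; last first.
  by have -> : a = a0 by apply: ord_inj; lia.
have b_a_a0 : b < a < a0 by rewrite lt_ba lt_aa0.
by have [down _] := ipR.2 _ _ _ b_a_a0; exact: down.
Qed.

Lemma incr_span_spec (a b : 'I_n) : a <= b -> ((a, b) \in R) = (b - a <= incr_span R b).
Proof.
move=> le_ab; apply/idP/idP => [|within_span]; first exact: incr_span_ge.
have [a0 le_a0b [a0b span_eq]] := incr_spanP (refl_R b).
have [lt_ab | eq_ab] := ltnP a b; last first.
  by have -> : a = b by apply: ord_inj; lia.
have [lt_a0a | le_aa0] := ltnP a0 a; last first.
  by have -> : a = a0 by apply: ord_inj; lia.
have a0_a_b : a0 < a < b by rewrite lt_a0a lt_ab.
by have [_ up] := ipR.2 _ _ _ a0_a_b; exact: up.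
Qed.

Lemma decr_span_nested (b c : 'I_n) : b <= c -> c - b <= decr_span R b ->
  decr_span R c <= decr_span R b - (c - b).
Proof.
move=> le_bc cb_span; have cb : (c, b) \in R by rewrite decr_span_spec.
have [a le_ca [ac ->]] := decr_spanP (refl_R c).
have ab : (a, b) \in R by case: ipR => -[_ _ trans] _; exact: trans cb.
by have := decr_span_ge (leq_trans le_bc le_ca) ab; lia.
Qed.

Lemma incr_span_nested (b c : 'I_n) : c <= b -> b - c <= incr_span R b ->
  incr_span R c <= incr_span R b - (b - c).
Proof.
move=> le_cb cb_span; have cb : (c, b) \in R by rewrite incr_span_spec.
have [a le_ac [ac ->]] := incr_spanP (refl_R c).
have ab : (a, b) \in R by case: ipR => -[_ _ trans] _; exact: trans cb.
by have := incr_span_ge (leq_trans le_ac le_cb) ab; lia.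
Qed.

Lemma spans_compatible (b c : 'I_n) : b < c -> c - b <= decr_span R b ->
  incr_span R c < c - b.
Proof.
move=> lt_bc cb_span; rewrite ltnNge; apply/negP => bc_span.
have cb : (c, b) \in R by rewrite decr_span_spec //; exact: ltnW.
have bc : (b, c) \in R by rewrite incr_span_spec //; exact: ltnW.
by case: ipR => -[_ antisym _] _; move: lt_bc; rewrite (antisym _ _ bc cb) ltnn.
Qed.

End IntervalPosetSpans.

Definition decr_diagram n (R : {set 'I_n * 'I_n}) : seq nat := mkseq (decr_span R) n.
Definition incr_diagram n (R : {set 'I_n * 'I_n}) : seq nat := mkseq (incr_span R) n.

Lemma letter_mkseq (f : nat -> nat) n b : b < n -> letter (mkseq f n) b.+1 = f b.
Proof. exact: nth_mkseq. Qed.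

Section Decoding.
Variables (n : nat) (R : {set 'I_n * 'I_n}).
Hypothesis ipR : interval_poset R.

Lemma diagrams_tamari_interval :
  tamari_interval_diagram n (decr_diagram R) (incr_diagram R).
Proof.
split.
- apply: tamari_diagram_intro => [|b lt_bn|b c lt_cn le_bc]; first exact: size_mkseq.
  + by rewrite letter_mkseq //; exact: (decr_span_bound ipR (Ordinal lt_bn)).
  + have lt_bn := leq_ltn_trans le_bc lt_cn.
    rewrite !letter_mkseq //.
    exact: (decr_span_nested ipR (b := Ordinal lt_bn) (c := Ordinal lt_cn)).
- apply: dual_tamari_diagram_intro => [|b lt_bn|b c lt_bn le_cb]; first exact: size_mkseq.
  + by rewrite letter_mkseq //; exact: (incr_span_bound ipR (Ordinal lt_bn)).
  + have lt_cn := leq_ltn_trans le_cb lt_bn.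
    rewrite !letter_mkseq //.
    exact: (incr_span_nested ipR (b := Ordinal lt_bn) (c := Ordinal lt_cn)).
- apply: compatible_intro => b c lt_bc lt_cn.
  have lt_bn := ltn_trans lt_bc lt_cn.
  rewrite !letter_mkseq //.
  exact: (spans_compatible ipR (b := Ordinal lt_bn) (c := Ordinal lt_cn)).
Qed.

Lemma chi_diagrams : chi n (decr_diagram R) (incr_diagram R) = R.
Proof.
apply/setP=> -[a b]; rewrite in_chi !letter_mkseq //=.
case: (ltngtP a b) => [lt_ab | lt_ba | /val_inj ->].
- by rewrite (incr_span_spec ipR (ltnW lt_ab)); lia.
- by rewrite (decr_span_spec ipR (ltnW lt_ba)); lia.
- by case: ipR => -[-> _ _] _; lia.
Qed.

End Decoding.

Section DecodingChi.
Variables (n : nat) (u v : seq nat).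
Hypothesis tid : tamari_interval_diagram n u v.

Lemma decr_span_chi (b : 'I_n) : decr_span (chi n u v) b = letter u b.+1.
Proof.
apply/eqP; rewrite eqn_leq; apply/andP; split.
- have [a le_ba [ab ->]] := decr_spanP (chi_refl u v b).
  by move: ab; rewrite in_chi; lia.
- have lt_an := u_bound tid (ltn_ord b).
  have := decr_span_ge (R := chi n u v) (a := Ordinal lt_an) (b := b); rewrite in_chi /=; lia.
Qed.

Lemma incr_span_chi (b : 'I_n) : incr_span (chi n u v) b = letter v b.+1.
Proof.
apply/eqP; rewrite eqn_leq; apply/andP; split.
- have [a le_ab [ab ->]] := incr_spanP (chi_refl u v b).
  by move: ab; rewrite in_chi; lia.
- have lt_an : b - letter v b.+1 < n by have := ltn_ord b; lia.
  have := v_bound tid (ltn_ord b).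
  have := incr_span_ge (R := chi n u v) (a := Ordinal lt_an) (b := b); rewrite in_chi /=; lia.
Qed.

Lemma decr_diagram_chi : decr_diagram (chi n u v) = u.
Proof.
have [[size_u _] _ _] := tid.
apply: (@eq_from_nth _ 0); rewrite size_mkseq ?size_u // => b lt_bn.
by rewrite nth_mkseq // (decr_span_chi (Ordinal lt_bn)).
Qed.

Lemma incr_diagram_chi : incr_diagram (chi n u v) = v.
Proof.
have [_ [size_v _] _] := tid.
apply: (@eq_from_nth _ 0); rewrite size_mkseq ?size_v // => b lt_bn.
by rewrite nth_mkseq // (incr_span_chi (Ordinal lt_bn)).
Qed.

End DecodingChi.

Theorem theorem1p4 (n : nat) (hn : 1 <= n) :
  (forall u v, tamari_interval_diagram n u v -> interval_poset (chi n u v)) /\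
  (forall u v u' v', tamari_interval_diagram n u v ->
     tamari_interval_diagram n u' v' -> chi n u v = chi n u' v' ->
     u = u' /\ v = v') /\
  (forall R : {set 'I_n * 'I_n}, interval_poset R ->
     exists u v, tamari_interval_diagram n u v /\ chi n u v = R).
Proof.
split; first exact: chi_interval_poset.
split=> [u v u' v' tid tid' chi_eq | R ipR].
- split.
  + by rewrite -(decr_diagram_chi tid) chi_eq (decr_diagram_chi tid').
  + by rewrite -(incr_diagram_chi tid) chi_eq (incr_diagram_chi tid').
- exists (decr_diagram R), (incr_diagram R).
  by split; [exact: diagrams_tamari_interval | exact: chi_diagrams].
Qed.
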